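(* Under the setting described in the context (conditions (V), (S), (C), compactly supported initial measure $\mu_0$, lattice approximate solution $\mu^N_t$), there is a constant $C$, independent of $l$ and $N$, such that $\|s[\mu^N_{t_l}]\|_{BL^*}\le C$ for all $l$ and $N$.
   Context: $\mathcal{M}^+(\mathbb{R}^k)$: finite nonnegative Borel measures; $\|f\|_{BL}=\max(\sup|f|,\operatorname{Lip}f)$, $\|\mu\|_{BL^*}=\sup\{\int\psi\,d\mu:\|\psi\|_{BL}\le1\}$. Conditions: (V) $V:\mathcal{M}^+(\mathbb{R}^d)\to\mathcal{M}^+(\mathbb{R}^d\times\mathbb{R}^d)$, $\pi_1^{\#}V[\mu]=\mu$; (V1) $\sup_{(x,v)\in\operatorname{supp}V[\mu]}|v|\le C_S(1+\sup_{(x,v)\in\operatorname{supp}V[\mu]}|x|)$; (V2) for each $R'>0$, $\|V[\mu]-V[\nu]\|_{BL^*}\le C_F(R')\|\mu-\nu\|_{BL^*}$ for $\mu,\nu$ supported in $B(0,R')$. (S) $s:\mathcal{M}^+(\mathbb{R}^d)\to\mathcal{M}^+(\mathbb{R}^d)$, (S1) $\|s[\mu]-s[\nu]\|_{BL^*}\le L\|\mu-\nu\|_{BL^*}$, (S2) $\operatorname{supp}s[\mu]\subseteq B(0,R)$ for all $\mu$. (C) $c:\mathbb{R}^d\times\mathcal{M}^+(\mathbb{R}^d)\to\mathbb{R}$, (C1) $|c|\le C_b$, (C2) $|c(x,\mu)-c(y,\nu)|\le C_L(|x-y|+\|\mu-\nu\|_{BL^*})$. Lattice scheme: fix $T>0$;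 $\Delta_N=1/N$; $x_1,\dots,x_I$ enumerate $(N^{-2}\mathbb{Z}^d)\cap[-N,N]^d$, $v_1,\dots,v_J$ enumerate $(N^{-1}\mathbb{Z}^d)\cap[-N,N]^d$; $Q_i=x_i+[0,\Delta_N^2)^d$, $Q'_j=v_j+[0,\Delta_N)^d$; $m_i^x(\mu)=\mu(Q_i)$, $m_{ij}^v(W)=W(Q_i\times Q'_j)$. Time points $t_l=l/N$, $l=0,\dots,M$, with the intervals $[t_l,t_{l+1})$ ($l<M$) and $[t_M,T]$ covering $[0,T]$, each of length at most $\Delta_N$. Set $\mu^N_0=\sum_i m_i^x(\mu_0)\delta_{x_i}$ and for $\tau\in[0,\Delta_N]$: $\mu^N_{t_l+\tau}=\tau\sum_i m_i^x(s[\mu^N_{t_l}])\delta_{x_i}+\sum_{i,j}m_{ij}^v(V[\mu^N_{t_l}])e^{c(x_i,\mu^N_{t_l})\tau}\delta_{x_i+\tau v_j}$. *)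

From HB Require Import structures.
From mathcomp Require Import all_boot all_order all_algebra.
From mathcomp Require Import all_classical all_reals all_analysis.
Set Implicit Arguments. Unset Strict Implicit. Unset Printing Implicit Defensive.
Import Order.TTheory GRing.Theory Num.Theory.
Import numFieldNormedType.Exports.
Local Open Scope classical_set_scope.
Local Open Scope ring_scope.

Definition eucl {R : realType} {d : nat} (x : 'rV[R]_d) : R :=
  Num.sqrt (\sum_(j < d) x ord0 j ^+ 2).

Definition Rd (R : realType) (d : nat) :=
  g_sigma_algebraType (@open 'rV[R]_d).
Definition Rdd (R : realType) (d : nat) :=
  g_sigma_algebraType (@open ('rV[R]_d * 'rV[R]_d)%type).

Definition distd {R : realType} {d : nat} (x y : Rd R d) : R :=
  eucl ((x : 'rV[R]_d) - (y : 'rV[R]_d)).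
Definition distdd {R : realType} {d : nat} (p q : Rdd R d) : R :=
  Num.sqrt (eucl (((p : 'rV[R]_d * 'rV[R]_d).1 : 'rV[R]_d) - (q : 'rV[R]_d * 'rV[R]_d).1) ^+ 2
          + eucl (((p : 'rV[R]_d * 'rV[R]_d).2 : 'rV[R]_d) - (q : 'rV[R]_d * 'rV[R]_d).2) ^+ 2).

Notation Mplus R d := {finite_measure set (Rd R d) -> \bar R}.
Notation Mplus2 R d := {finite_measure set (Rdd R d) -> \bar R}.

Definition BL1 {T : Type} {R : realType} (dist : T -> T -> R) : set (T -> R) :=
  [set psi | (forall x, `|psi x| <= 1) /\
             (forall x y, `|psi x - psi y| <= dist x y)].

Definition bl_dist {dd : measure_display} {T : measurableType dd} {R : realType}
  (dist : T -> T -> R) (mu nu : set T -> \bar R) : \bar R :=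
  ereal_sup [set ((\int[mu]_x (psi x)%:E) - (\int[nu]_x (psi x)%:E))%E
            | psi in BL1 dist].

Definition bl_norm {dd : measure_display} {T : measurableType dd} {R : realType}
  (dist : T -> T -> R) (mu : set T -> \bar R) : \bar R :=
  ereal_sup [set (\int[mu]_x (psi x)%:E)%E | psi in BL1 dist].

Definition supp {dd : measure_display} {T : measurableType dd} {R : realType}
  (dist : T -> T -> R) (mu : set T -> \bar R) : set T :=
  [set x | forall r : R, 0 < r -> (0 < mu [set y | (dist x y < r)%R])%E].

Definition cball {R : realType} {d : nat} (r : R) : set 'rV[R]_d :=
  [set x | eucl x <= r].

(* lattice points: x_i in (N^-2 Z^d) cap [-N,N]^d, indexed by integer offsets *)
Definition xidx (d N : nat) := {ffun 'I_d -> 'I_(2 * N ^ 3).+1}.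
Definition vidx (d N : nat) := {ffun 'I_d -> 'I_(2 * N ^ 2).+1}.

Definition latx {R : realType} {d N : nat} (i : xidx d N) : 'rV[R]_d :=
  \row_j (((i j : nat)%:R - (N ^ 3)%:R) / (N ^ 2)%:R).
Definition latv {R : realType} {d N : nat} (j : vidx d N) : 'rV[R]_d :=
  \row_k (((j k : nat)%:R - (N ^ 2)%:R) / N%:R).

Definition Qx {R : realType} {d N : nat} (i : xidx d N) : set 'rV[R]_d :=
  [set y | forall k, latx i ord0 k <= y ord0 k < latx i ord0 k + 1 / (N ^ 2)%:R].
Definition Qv {R : realType} {d N : nat} (j : vidx d N) : set 'rV[R]_d :=
  [set y | forall k, latv j ord0 k <= y ord0 k < latv j ord0 k + 1 / N%:R].

From HB Require Import structures.
From mathcomp Require Import all_boot all_order all_algebra.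
From mathcomp Require Import all_classical all_reals all_analysis.
From mathcomp Require Import ring lra.
Import Order.TTheory GRing.Theory Num.Theory.
Import numFieldNormedType.Exports.
Local Open Scope classical_set_scope.
Local Open Scope ring_scope.

(* The BL-norm of a finite nonnegative measure is at most its total mass, and
   testing (S1) against the constant function 1 shows that the mass of s[mu] is
   at most a + |L| mass(mu), with a depending only on mu0.  One step of the
   scheme does not create mass on the lattice, and since the first marginal of
   V[mu] is mu, the transport part multiplies the mass by at most exp(C_b/N).
   Hence m_(l+1) + a <= (1 + P/N) (m_l + a) with P = |L| + C_b exp(C_b) + 1,
   and discrete Gronwall gives
   m_l + a <= exp(P T) (m_0 + a) <= exp(P T) (mass(mu0) + a) whenever t_l <= T. *)

Section borel_sets.
Context (R : realType) (X : ptopologicalType).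
Local Notation borel := (g_sigma_algebraType (@open X)).

Lemma borel_measurable_lt (f : X -> R) (b : R) : continuous f ->
  measurable ([set x | f x < b] : set borel).
Proof.
move=> cf; apply: sub_sigma_algebra.
by apply: (open_comp (D := [set y | y < b])) => [x _|]; [exact: cf|exact: open_lt].
Qed.

Lemma borel_measurable_box (I : finType) (f : I -> X -> R) (a b : I -> R) :
  (forall k, continuous (f k)) ->
  measurable ([set x | forall k, a k <= f k x < b k] : set borel).
Proof.
move=> cf.
have -> : [set x | forall k, a k <= f k x < b k] =
    \bigcap_(k in [set: I]) (~` [set x | f k x < a k] `&` [set x | f k x < b k]).
  apply/seteqP; split => x /=.
    move=> xab k _; have /andP[akx xbk] := xab k.
    by split => //=; apply/negP; rewrite -leNgt.
  by move=> xab k; have [/negP] := xab k Logic.I; rewrite -leNgt => -> ->.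
apply: fin_bigcap_measurable; first exact: finite_finset.
by move=> k _; apply: measurableI; [apply: measurableC|]; exact: borel_measurable_lt.
Qed.

End borel_sets.

Section finite_mass.
Context {d : measure_display} {T : measurableType d} {R : realType}.
Implicit Types mu nu : {finite_measure set T -> \bar R}.

Definition mass (mu : set T -> \bar R) : R := fine (mu setT).

Lemma measureT_mass mu : mu setT = (mass mu)%:E.
Proof. by rewrite fineK //; exact: fin_num_measure. Qed.

Lemma mass_ge0 mu : 0 <= mass mu.
Proof. by rewrite -lee_fin -measureT_mass. Qed.

Lemma sum_disjoint_measure_le_mass mu (I : finType) (F : I -> set T) :
  (forall i, measurable (F i)) -> (forall i j x, F i x -> F j x -> i = j) ->
  \sum_(i : I) fine (mu (F i)) <= mass mu.
Proof.
move=> mF F_inj; rewrite -lee_fin -sumEFin -measureT_mass.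
under eq_bigr do rewrite fineK ?fin_num_measure //.
have -> : (\sum_(i : I) mu (F i))%E = (\sum_(i \in [set: I]) mu (F i))%E.
  rewrite (fsbigE (index_enum I)) ?index_enum_uniq //; last first.
    by move=> i _; rewrite mem_index_enum.
  by under [RHS]eq_bigl do rewrite in_setT.
rewrite -(measure_fin_bigcup mu) //.
- apply: le_measure; rewrite ?inE //.
  exact: fin_bigcup_measurable (@finite_finset I _) _.
- exact: (@finite_finset I _).
- by move=> i j _ _ [x [Fix Fjx]]; exact: F_inj Fix Fjx.
Qed.

(* No measurability is needed: a nonnegative integral is a supremum over
   simple minorants. *)
Lemma ge0_le_integralT (mu : {measure set T -> \bar R}) (f g : T -> \bar R) :
  (forall x, (0 <= f x)%E) -> (forall x, (f x <= g x)%E) ->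
  (\int[mu]_x f x <= \int[mu]_x g x)%E.
Proof.
move=> f0 fg; have g0 x : (0 <= g x)%E := le_trans (f0 x) (fg x).
rewrite !ge0_integralTE //; apply: ereal_sup_le => _ [h hf <-].
by exists h => // x; exact: le_trans (hf x) (fg x).
Qed.

Lemma integral_bounded_measureT (mu : {measure set T -> \bar R}) (psi : T -> R) :
  (forall x, `|psi x| <= 1) ->
  (- mu setT <= \int[mu]_x (psi x)%:E <= mu setT)%E.
Proof.
move=> psi1; have le_measureT (f : T -> \bar R) : (forall x, 0 <= f x)%E ->
    (forall x, f x <= 1)%E -> (\int[mu]_x f x <= mu setT)%E.
  move=> f0 f1; rewrite -[mu setT]mul1e -integral_cst //.
  exact: ge0_le_integralT.
have pos : (\int[mu]_x (EFin \o psi)^\+ x <= mu setT)%E.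
  apply: le_measureT => x; first exact: funepos_ge0.
  rewrite funeposE ge_max lee01 andbT lee_fin.
  exact: le_trans (ler_norm _) (psi1 x).
have neg : (\int[mu]_x (EFin \o psi)^\- x <= mu setT)%E.
  apply: le_measureT => x; first exact: funeneg_ge0.
  rewrite funenegE ge_max lee01 andbT -EFinN lee_fin.
  by apply: le_trans (ler_norm _) _; rewrite normrN.
rewrite integralE; apply/andP; split.
- rewrite -[X in (X <= _)%E]sub0e; apply: leeB => //.
  by apply: integral_ge0 => x _; exact: funepos_ge0.
- rewrite -[X in (_ <= X)%E]sube0; apply: leeB => //.
  by apply: integral_ge0 => x _; exact: funeneg_ge0.
Qed.

Context {dist : T -> T -> R}.

Lemma bl_norm_le_mass mu : (bl_norm dist mu <= (mass mu)%:E)%E.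
Proof.
apply: ge_ereal_sup => _ [psi [psi1 _] <-]; rewrite -measureT_mass.
by have /andP[] := integral_bounded_measureT mu psi psi1.
Qed.

Lemma bl_dist_le_massD mu nu : (bl_dist dist mu nu <= (mass mu + mass nu)%:E)%E.
Proof.
apply: ge_ereal_sup => _ [psi [psi1 _] <-]; rewrite EFinD -!measureT_mass.
have /andP[_ le_mu] := integral_bounded_measureT mu psi psi1.
have /andP[le_nu _] := integral_bounded_measureT nu psi psi1.
by apply: leeD => //; rewrite leeNl.
Qed.

Hypothesis dist_ge0 : forall x y, 0 <= dist x y.

Lemma cst_BL1 (a : R) : `|a| <= 1 -> BL1 dist (cst a).
Proof. by move=> a1; split => // x y; rewrite subrr normr0. Qed.

Lemma bl_dist_ge0 mu nu : (0 <= bl_dist dist mu nu)%E.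
Proof.
apply: ereal_sup_ubound; exists (cst 0); first by apply: cst_BL1; rewrite normr0.
by rewrite !integral0 subee.
Qed.

Lemma massB_le_bl_dist mu nu : ((mass mu - mass nu)%:E <= bl_dist dist mu nu)%E.
Proof.
apply: ereal_sup_ubound; exists (cst 1); first by apply: cst_BL1; rewrite normr1.
by rewrite /cst /= !integral_cst // !mul1e EFinB -!measureT_mass.
Qed.

Lemma mass_le_bl_lipschitz {mu' nu' mu nu : {finite_measure set T -> \bar R}} {L : R} :
  (bl_dist dist mu' nu' <= L%:E * bl_dist dist mu nu)%E ->
  mass mu' <= mass nu' + `|L| * (mass mu + mass nu).
Proof.
move=> lip; rewrite -lerBlDl -lee_fin EFinM.
apply: le_trans (massB_le_bl_dist mu' nu') _; apply: le_trans lip _.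
apply: le_trans (_ : `|L|%:E * bl_dist dist mu nu <= _)%E.
  by apply: lee_wpmul2r; [exact: bl_dist_ge0|rewrite lee_fin ler_norm].
by apply: lee_wpmul2l; [rewrite lee_fin|exact: bl_dist_le_massD].
Qed.

End finite_mass.

Lemma expR_le1D_mul (R : realType) (x y : R) : 0 <= x <= y -> expR x <= 1 + x * expR y.
Proof.
move=> /andP[x0 xy]; have Ex0 := expR_ge0 x.
have : expR x * (1 - x) <= expR x * expR (- x) by rewrite ler_wpM2l // expR_ge1Dx.
rewrite -expRD subrr expR0 => Ex1.
have : x * expR x <= x * expR y by rewrite ler_wpM2l // ler_expR.
lra.
Qed.

Lemma discrete_gronwall (R : realType) (u : nat -> R) (p : R) (n : nat) :
  0 <= p -> 0 <= u 0%N -> (forall k, (k < n)%N -> u k.+1 <= (1 + p) * u k) ->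
  u n <= expR (p * n%:R) * u 0%N.
Proof.
move=> p0 u0 step; apply: le_trans (_ : (1 + p) ^+ n * u 0%N <= _).
  elim: n step => [|n IH] step; first by rewrite expr0 mul1r.
  apply: le_trans (step n (ltnSn n)) _; rewrite exprS -mulrA ler_wpM2l //.
    by rewrite addr_ge0.
  by apply: IH => k kn; apply: step; rewrite ltnS ltnW.
rewrite ler_wpM2r // mulrC expRM_natl lerXn2r ?nnegrE ?expR_ge0 ?addr_ge0 //.
exact: expR_ge1Dx.
Qed.

Lemma unit_cell_inj (R : realType) (u v : nat) (Q M y : R) : 0 < Q ->
  (u%:R - M) / Q <= y < (u%:R - M) / Q + 1 / Q ->
  (v%:R - M) / Q <= y < (v%:R - M) / Q + 1 / Q -> u = v.
Proof.
move=> Q0; have cellE (w : nat) : (w%:R - M) / Q <= y < (w%:R - M) / Q + 1 / Q ->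
    Num.floor (y * Q + M) = w.
  rewrite -mulrDl ler_pdivrMr // ltr_pdivlMr // => cell.
  by apply: floor_def; rewrite intrD /=; lra.
by move=> /cellE hu /cellE; rewrite hu => -[].
Qed.

Lemma distd_ge0 {R : realType} {d : nat} (x y : Rd R d) : 0 <= distd x y.
Proof. exact: sqrtr_ge0. Qed.

Section lattice_cells.
Context {R : realType} {d N : nat}.

Lemma Qx_measurable (i : xidx d N) : measurable (Qx i : set (Rd R d)).
Proof. by apply: borel_measurable_box => k; exact: coord_continuous. Qed.

Lemma QxQv_measurable (i : xidx d N) (j : vidx d N) :
  measurable (Qx i `*` Qv j : set (Rdd R d)).
Proof.
change (measurable ([set p : 'rV[R]_d * 'rV[R]_d | Qx i p.1] `&`
                    [set p | Qv j p.2] : set (Rdd R d))).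
pose rV2 := (('rV[R]_d * 'rV[R]_d)%type : normedModType R).
apply: measurableI; apply: (@borel_measurable_box R rV2) => k p.
  apply: (@cvg_comp _ _ _ fst (fun x : 'rV[R]_d => x ord0 k) _ (nbhs p.1)).
    exact: cvg_fst.
  exact: coord_continuous.
apply: (@cvg_comp _ _ _ snd (fun v : 'rV[R]_d => v ord0 k) _ (nbhs p.2)).
  exact: cvg_snd.
exact: coord_continuous.
Qed.

Hypothesis N_gt0 : (0 < N)%N.

Lemma Qx_inj (i i' : xidx d N) (x : 'rV[R]_d) : Qx i x -> Qx i' x -> i = i'.
Proof.
move=> xi xi'; apply/ffunP => k; apply/val_inj.
have := xi k; have := xi' k; rewrite !mxE => /[swap].
by apply: unit_cell_inj; rewrite ltr0n expn_gt0 N_gt0.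
Qed.

Lemma Qv_inj (j j' : vidx d N) (v : 'rV[R]_d) : Qv j v -> Qv j' v -> j = j'.
Proof.
move=> vj vj'; apply/ffunP => k; apply/val_inj.
have := vj k; have := vj' k; rewrite !mxE => /[swap].
by apply: unit_cell_inj; rewrite ltr0n.
Qed.

Lemma sum_Qx_le_mass (mu : Mplus R d) : \sum_(i : xidx d N) fine (mu (Qx i)) <= mass mu.
Proof.
by apply: sum_disjoint_measure_le_mass => [i|i i' x]; [exact: Qx_measurable|exact: Qx_inj].
Qed.

Lemma sum_QxQv_le_mass (W : Mplus2 R d) :
  \sum_(i : xidx d N) \sum_(j : vidx d N) fine (W (Qx i `*` Qv j)) <= mass W.
Proof.
rewrite pair_big /=.
apply: (@sum_disjoint_measure_le_mass _ _ _ W _ (fun ij => Qx ij.1 `*` Qv ij.2)).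
  by move=> [i j]; exact: QxQv_measurable.
by move=> [i j] [i' j'] x [/= /Qx_inj ii' /Qv_inj jj'] [/= /ii' -> /jj' ->].
Qed.

End lattice_cells.

Section lattice_scheme.
Context (R : realType) (d : nat) (T : R).
Variables (V : Mplus R d -> Mplus2 R d) (s : Mplus R d -> Mplus R d).
Variables (c : 'rV[R]_d -> Mplus R d -> R) (L C_b : R).
Variables (mu0 : Mplus R d) (muN : nat -> nat -> Mplus R d).

Hypothesis V_marginal : forall (mu : Mplus R d) (A : set (Rd R d)), measurable A ->
  V mu (A `*` setT) = mu A.
Hypothesis s_lipschitz : forall mu nu : Mplus R d,
  (bl_dist distd (s mu) (s nu) <= L%:E * bl_dist distd mu nu)%E.
Hypothesis c_bounded : forall x (mu : Mplus R d), `|c x mu| <= C_b.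
Hypothesis scheme_init : forall N : nat, (0 < N)%N ->
  forall A : set (Rd R d), measurable A ->
  muN N 0%N A = (\sum_(i : xidx d N) fine (mu0 (Qx i)) * (\1_A (latx i) : R))%:E.
Hypothesis scheme_succ : forall (N l : nat), (0 < N)%N -> (l.+1)%:R / N%:R <= T ->
  forall A : set (Rd R d), measurable A ->
  muN N l.+1 A =
  (N%:R^-1 * (\sum_(i : xidx d N) fine (s (muN N l) (Qx i)) * (\1_A (latx i) : R))
   + \sum_(i : xidx d N) \sum_(j : vidx d N)
       fine (V (muN N l) (Qx i `*` Qv j)) *
       expR (c (latx i) (muN N l) * N%:R^-1) *
       (\1_A (latx i + N%:R^-1 *: latv j) : R))%:E.

Lemma mass_V (mu : Mplus R d) : mass (V mu) = mass mu.
Proof. by rewrite /mass -setXTT V_marginal. Qed.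

Let K := `|L|.
Let a := mass (s mu0) + K * mass mu0.
Let G := C_b * expR C_b.
Let P := K + G + 1.

Let C_b_ge0 : 0 <= C_b.
Proof. exact: le_trans (normr_ge0 _) (c_bounded 0 mu0). Qed.
Let a_ge0 : 0 <= a.
Proof. by rewrite /a /K addr_ge0 ?mulr_ge0 ?mass_ge0. Qed.
Let P_ge0 : 0 <= P.
Proof. by rewrite /P /G /K !addr_ge0 ?mulr_ge0 ?expR_ge0. Qed.

Lemma mass_s_le (mu : Mplus R d) : mass (s mu) <= a + K * mass mu.
Proof.
have := mass_le_bl_lipschitz distd_ge0 (s_lipschitz mu mu0).
rewrite /a /K; lra.
Qed.

Lemma mass_scheme_init N : (0 < N)%N -> mass (muN N 0) <= mass mu0.
Proof.
move=> N0; rewrite [X in X <= _]/mass scheme_init //= indicT.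
under eq_bigr do rewrite mulr1.
exact: sum_Qx_le_mass.
Qed.

Lemma mass_scheme_succ N l : (0 < N)%N -> l.+1%:R / N%:R <= T ->
  mass (muN N l.+1) <= N%:R^-1 * mass (s (muN N l)) + expR (C_b / N%:R) * mass (muN N l).
Proof.
move=> N0 hl; have N1_ge0 : 0 <= N%:R^-1 :> R by rewrite invr_ge0.
rewrite [X in X <= _]/mass scheme_succ //= !indicT.
under eq_bigr do rewrite mulr1.
under [X in _ + X <= _]eq_bigr do under eq_bigr do rewrite mulr1.
apply: lerD; first by rewrite ler_wpM2l // sum_Qx_le_mass.
rewrite -mass_V mulrC.
apply: le_trans (_ : \sum_i \sum_j fine (V (muN N l) (Qx i `*` Qv j)) * expR (C_b / N%:R) <= _).
  apply: ler_sum => i _; apply: ler_sum => j _.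
  rewrite ler_wpM2l ?fine_ge0 ?measure_ge0 // ler_expR ler_wpM2r //.
  exact: le_trans (ler_norm _) (c_bounded _ _).
under eq_bigr do rewrite -big_distrl.
by rewrite -big_distrl ler_wpM2r ?expR_ge0 // sum_QxQv_le_mass.
Qed.

Lemma mass_scheme_succ_affine N l : (0 < N)%N -> l.+1%:R / N%:R <= T ->
  mass (muN N l.+1) + a <= (1 + P / N%:R) * (mass (muN N l) + a).
Proof.
move=> N0 hl; have := mass_scheme_succ N l N0 hl; have := mass_s_le (muN N l).
have m_ge0 := mass_ge0 (muN N l).
set n := N%:R^-1; set m := mass (muN N l); set ms := mass (s _).
have n_ge0 : 0 <= n by rewrite invr_ge0.
have n_le1 : n <= 1 by rewrite invf_le1 ?ltr0n // ler1n.
have exp_le : expR (C_b * n) <= 1 + G * n.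
  rewrite /G mulrAC; apply: expR_le1D_mul.
  by rewrite mulr_ge0 //= ler_piMr.
move=> ms_le step.
have : n * ms <= n * (a + K * m) by rewrite ler_wpM2l.
have : expR (C_b * n) * m <= (1 + G * n) * m by rewrite ler_wpM2r.
have : 0 <= n * m by rewrite mulr_ge0.
have : 0 <= n * a * (K + G).
  by rewrite /K /G !mulr_ge0 // addr_ge0 ?mulr_ge0 ?expR_ge0.
have : (1 + P * n) * (m + a) =
    n * (a + K * m) + (1 + G * n) * m + a + n * m + n * a * (K + G) by rewrite /P; ring.
lra.
Qed.

Lemma mass_scheme_le N l : (0 < N)%N -> l%:R / N%:R <= T ->
  mass (muN N l) + a <= expR (P * T) * (mass mu0 + a).
Proof.
move=> N0 hl; have N1_ge0 : 0 <= N%:R^-1 :> R by rewrite invr_ge0.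
have step k : (k < l)%N ->
    mass (muN N k.+1) + a <= (1 + P / N%:R) * (mass (muN N k) + a).
  move=> kl; apply: mass_scheme_succ_affine => //; apply: le_trans _ hl.
  by rewrite ler_wpM2r // ler_nat.
have u0_ge0 : 0 <= mass (muN N 0) + a by rewrite addr_ge0 ?mass_ge0.
apply: le_trans (@discrete_gronwall _ (fun k => mass (muN N k) + a) _ _ _ u0_ge0 step) _.
  by rewrite mulr_ge0.
apply: ler_pM; rewrite ?expR_ge0 // ?lerD2r ?mass_scheme_init // ler_expR.
by rewrite mulrAC -mulrA ler_wpM2l.
Qed.

Lemma bl_norm_scheme_bounded : exists C : R, forall N l, (0 < N)%N -> l%:R / N%:R <= T ->
  (bl_norm distd (s (muN N l)) <= C%:E)%E.
Proof.
exists (a + K * (expR (P * T) * (mass mu0 + a))) => N l N0 hl.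
apply: le_trans (bl_norm_le_mass _) _; rewrite lee_fin.
apply: le_trans (mass_s_le _) _; rewrite lerD2l ler_wpM2l ?normr_ge0 //.
by apply: le_trans (mass_scheme_le N l N0 hl); rewrite lerDl.
Qed.

End lattice_scheme.

Theorem corollary4p7 (R : realType) (d : nat) (T : R)
  (V : Mplus R d -> Mplus2 R d) (s : Mplus R d -> Mplus R d)
  (c : 'rV[R]_d -> Mplus R d -> R)
  (C_S : R) (C_F : R -> R) (L Rs C_b C_L : R)
  (mu0 : Mplus R d)
  (muN : nat -> nat -> Mplus R d) :
  0 < T ->
  (* (V) *)
  (forall (mu : Mplus R d) (A : set (Rd R d)), measurable A ->
      V mu (A `*` setT) = mu A) ->
  (* (V1) *)
  0 <= C_S ->
  (forall (mu : Mplus R d) (p : 'rV[R]_d * 'rV[R]_d),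
      supp distdd (V mu) p ->
      ((eucl p.2)%:E <= C_S%:E *
          (1 + ereal_sup [set (eucl q.1)%:E | q in supp distdd (V mu)]))%E) ->
  (* (V2) *)
  (forall R' : R, 0 < R' -> forall mu nu : Mplus R d,
      supp distd mu `<=` cball R' -> supp distd nu `<=` cball R' ->
      (bl_dist distdd (V mu) (V nu) <= (C_F R')%:E * bl_dist distd mu nu)%E) ->
  (* (S1) *)
  (forall mu nu : Mplus R d,
      (bl_dist distd (s mu) (s nu) <= L%:E * bl_dist distd mu nu)%E) ->
  (* (S2) *)
  (forall mu : Mplus R d, supp distd (s mu) `<=` cball Rs) ->
  (* (C1) *)
  (forall x (mu : Mplus R d), `|c x mu| <= C_b) ->
  (* (C2) *)
  (forall x y (mu nu : Mplus R d),
      (`|c x mu - c y nu|%:E <= C_L%:E * ((distd x y)%:E + bl_dist distd mu nu))%E) ->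
  (* compactly supported initial datum *)
  compact (supp distd mu0 : set 'rV[R]_d) ->
  (* lattice scheme: mu^N_{t_0} *)
  (forall N : nat, (0 < N)%N -> forall A : set (Rd R d), measurable A ->
      muN N 0%N A =
      (\sum_(i : xidx d N) fine (mu0 (Qx i)) * (\1_A (latx i) : R))%:E) ->
  (* lattice scheme: mu^N_{t_{l+1}} = mu^N_{t_l + Delta_N}, for t_{l+1} <= T *)
  (forall (N l : nat), (0 < N)%N -> (l.+1)%:R / N%:R <= T ->
      forall A : set (Rd R d), measurable A ->
      muN N l.+1 A =
      (N%:R^-1 * (\sum_(i : xidx d N) fine (s (muN N l) (Qx i)) * (\1_A (latx i) : R))
       + \sum_(i : xidx d N) \sum_(j : vidx d N)
           fine (V (muN N l) (Qx i `*` Qv j)) *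
           expR (c (latx i) (muN N l) * N%:R^-1) *
           (\1_A (latx i + N%:R^-1 *: latv j) : R))%:E) ->
  exists C : R, forall (N l : nat), (0 < N)%N -> l%:R / N%:R <= T ->
    (bl_norm distd (s (muN N l)) <= C%:E)%E.
Proof.
move=> _ V_marginal _ _ _ s_lipschitz _ c_bounded _ _ scheme_init scheme_succ.
exact: bl_norm_scheme_bounded V_marginal s_lipschitz c_bounded scheme_init scheme_succ.
Qed.
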